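(* Let $\mathcal{X}$ be a context space, $\mathcal{A}$ a finite arm set, $\hat f:\mathcal{X}\times\mathcal{A}\to[0,1]$, $\hat\pi_{\text{con}}:\mathcal{X}\to\mathcal{A}$, $\hat U_{\text{con}}>0$, $\hat g:\mathcal{X}\to 2^{\mathcal{A}}$, $\beta_{\max}\in(0,1)$ and $\eta\ge 1$. For $\zeta>0$ let $C(x,\zeta):=\{a\in\hat g(x):\hat f(x,\hat\pi_{\text{con}}(x))-\hat f(x,a)\le\hat U_{\text{con}}/\zeta\}$ (assumed nonempty), let $\mathrm{Unif}_\zeta(\cdot\mid x)$ be the uniform distribution on $C(x,\zeta)$, and define $$p(a\mid x):=(1-\beta_{\max})\mathrm{Unif}_{\beta_{\max}/\eta}(a\mid x)+\int_0^{\beta_{\max}}\mathrm{Unif}_{\beta/\eta}(a\mid x)\,d\beta .$$ Then for all $x\in\mathcal{X}$ and $a\in\mathcal{A}$: if $a\in C(x,\beta_{\max}/\eta)$, then $p(a\mid x)\ge\frac{1-\beta_{\max}}{|C(x,\beta_{\max}/\eta)|}+\frac{\beta_{\max}}{|\hat g(x)|}\ge\frac{1}{|\hat g(x)|}$; if $a\notin C(x,\beta_{\max}/\eta)$ and $a\in\hat g(x)$, then $p(a\mid x)\ge\frac{\eta}{|\hat g(x)|}\frac{\hat U_{\text{con}}}{\hat f(x,\hat\pi_{\text{con}}(x))-\hat f(x,a)}\ge\frac{\eta\hat U_{\text{con}}}{|\hat g(x)|}$; and otherwise $p(a\mid x)\ge 0$. *)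

From HB Require Import structures.
From mathcomp Require Import all_boot all_order all_algebra.
From mathcomp Require Import all_classical all_reals all_analysis.
Set Implicit Arguments. Unset Strict Implicit. Unset Printing Implicit Defensive.
Import Order.TTheory GRing.Theory Num.Theory.
Import numFieldNormedType.Exports.
Local Open Scope classical_set_scope.
Local Open Scope ring_scope.

Definition Cset (X : Type) (A : finType) (R : realType)
  (fhat : X -> A -> R) (pihat : X -> A) (Uhat : R) (ghat : X -> {set A})
  (x : X) (zeta : R) : {set A} :=
  [set a in ghat x | fhat x (pihat x) - fhat x a <= Uhat / zeta].

Definition unif (X : Type) (A : finType) (R : realType)
  (fhat : X -> A -> R) (pihat : X -> A) (Uhat : R) (ghat : X -> {set A})
  (zeta : R) (x : X) (a : A) : R :=
  if a \in Cset fhat pihat Uhat ghat x zeta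
  then (#|Cset fhat pihat Uhat ghat x zeta|%:R)^-1 else 0.

Definition ppol (X : Type) (A : finType) (R : realType)
  (fhat : X -> A -> R) (pihat : X -> A) (Uhat : R) (ghat : X -> {set A})
  (bmax eta : R) (x : X) (a : A) : R :=
  (1 - bmax) * unif fhat pihat Uhat ghat (bmax / eta) x a
  + fine (\int[@lebesgue_measure R]_(b in `[0%R, bmax]%classic)
            ((unif fhat pihat Uhat ghat (b / eta) x a)%:E)).

(** The mixture [p] puts mass [1 - bmax] on the uniform distribution over
    [C(x, bmax/eta)] and spreads mass [bmax] over the uniform distributions
    on [C(x, b/eta)], [0 <= b <= bmax]. These sets shrink as [b] grows, and
    an arm [a] of [ghat x] with gap [fhat x (pihat x) - fhat x a] lies in
    [C(x, b/eta)] as soon as [b <= eta Uhat / gap]; for such [b] the uniform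
    distribution gives [a] at least [1/|ghat x|], because [C(x, b/eta)] is a
    subset of [ghat x]. Integrating this bound over [(0, bmax]] (for arms of
    [C(x, bmax/eta)]) or over [(0, eta Uhat / gap]] (for the other arms of
    [ghat x]) gives the claimed lower bounds. *)
From HB Require Import structures.
From mathcomp Require Import all_boot all_order all_algebra.
From mathcomp Require Import all_classical all_reals all_analysis.
From mathcomp Require Import ring lra.
Import Order.TTheory GRing.Theory Num.Theory.
Import numFieldNormedType.Exports.
Local Open Scope classical_set_scope.
Local Open Scope ring_scope.

Set Implicit Arguments.
Unset Strict Implicit.
Unset Printing Implicit Defensive.

Section integral_without_measurability.
Local Open Scope ereal_scope.
Context d (T : measurableType d) (R : realType).
Variable mu : {measure set T -> \bar R}.

(* The integral of a nonnegative function is a supremum over the simple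
   functions below it, so it is monotone even for non-measurable functions. *)
Lemma ge0_le_integralT (f g : T -> \bar R) :
  (forall x, 0 <= f x) -> (forall x, f x <= g x) ->
  \int[mu]_x f x <= \int[mu]_x g x.
Proof.
move=> f0 fg; have g0 x : 0 <= g x := le_trans (f0 x) (fg x).
rewrite !ge0_integralTE //; apply: ereal_sup_le => _ [h /= hf <-].
by exists h => //= x; apply: le_trans (hf x) (fg x).
Qed.

Lemma ge0_le_integral_subset (D E : set T) (f g : T -> \bar R) :
  D `<=` E -> (forall x, D x -> 0 <= f x) -> (forall x, E x -> 0 <= g x) ->
  (forall x, D x -> f x <= g x) ->
  \int[mu]_(x in D) f x <= \int[mu]_(x in E) g x.
Proof.
move=> DE f0 g0 fg; rewrite (integral_mkcond D) (integral_mkcond E).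
apply: ge0_le_integralT; first exact: erestrict_ge0.
by move=> x; apply: le_trans (lee_restrict fg x) (restrict_lee g0 DE x).
Qed.

End integral_without_measurability.

Section bounded_integral_on_itv.
Variable R : realType.
Local Notation lebesgue := (@lebesgue_measure R).
Variables (F : R -> R) (l M : R).
Hypothesis l_ge0 : 0 <= l.
Hypothesis F_bound : forall b, 0 <= b <= l -> 0 <= F b <= M.

Let F_ge0 b : `[0%R, l]%classic b -> (0 <= (F b)%:E)%E.
Proof. by rewrite /= in_itv lee_fin => /F_bound /andP[]. Qed.

Lemma integral_itv_le :
  (\int[lebesgue]_(b in `[0%R, l]%classic) (F b)%:E <= (M * l)%:E)%E.
Proof.
apply: le_trans (_ : (\int[lebesgue]_(b in `[0%R, l]%classic) M%:E <= _)%E).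
  apply: ge0_le_integral_subset => // b; rewrite /= in_itv /= lee_fin;
    move=> /F_bound /andP[//]; exact: le_trans.
rewrite integral_cst //= lebesgue_measure_itv /= lte_fin oppr0 adde0.
by case: ltgtP l_ge0 => // <- _; rewrite mule0 mulr0.
Qed.

Lemma integral_itv_ge (c b1 : R) :
  0 <= c -> 0 < b1 <= l -> (forall b, 0 < b <= b1 -> c <= F b) ->
  ((c * b1)%:E <= \int[lebesgue]_(b in `[0%R, l]%classic) (F b)%:E)%E.
Proof.
move=> c_ge0 /andP[b1_gt0 b1_le] F_ge.
apply: le_trans (_ : (\int[lebesgue]_(b in `]0%R, b1]%classic) c%:E <= _)%E).
  rewrite integral_cst //= lebesgue_measure_itv /= lte_fin b1_gt0.
  by rewrite oppr0 adde0 -EFinM.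
apply: ge0_le_integral_subset => // b; rewrite /= !in_itv /= ?lee_fin.
by move=> /andP[/ltW -> /le_trans ->].
Qed.

Lemma fine_integral_itv_ge (c b1 : R) :
  0 <= c -> 0 < b1 <= l -> (forall b, 0 < b <= b1 -> c <= F b) ->
  c * b1 <= fine (\int[lebesgue]_(b in `[0%R, l]%classic) (F b)%:E).
Proof.
move=> c_ge0 b1_itv F_ge; have lo := integral_itv_ge c_ge0 b1_itv F_ge.
have cb1_ge0 : 0 <= c * b1 by case/andP: b1_itv => /ltW /(mulr_ge0 c_ge0).
rewrite -lee_fin fineK // ge0_fin_numE; last exact: le_trans lo.
by apply: le_lt_trans integral_itv_le _; rewrite ltry.
Qed.

End bounded_integral_on_itv.

Section uniform_on_candidates.
Variables (X : Type) (A : finType) (R : realType).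
Variables (fhat : X -> A -> R) (pihat : X -> A) (Uhat : R).
Variable ghat : X -> {set A}.
Local Notation C := (Cset fhat pihat Uhat ghat).
Local Notation Unif := (unif fhat pihat Uhat ghat).
Local Notation gap x a := (fhat x (pihat x) - fhat x a).

Lemma Cset_sub x zeta : C x zeta \subset ghat x.
Proof. by apply/fintype.subsetP => a; rewrite inE => /andP[]. Qed.

Lemma inv_card_ghat_le x zeta a :
  a \in C x zeta -> #|ghat x|%:R^-1 <= #|C x zeta|%:R^-1 :> R.
Proof.
move=> aC; have C_gt0 : (0 < #|C x zeta|)%N by apply/card_gt0P; exists a.
have le_card := subset_leq_card (Cset_sub x zeta).
by rewrite lef_pV2 ?posrE ?ltr0n ?ler_nat //; apply: leq_trans C_gt0 le_card.
Qed.

Lemma unif_ge0 zeta x a : 0 <= Unif zeta x a.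
Proof. by rewrite /unif; case: ifP. Qed.

Lemma unif_le1 zeta x a : Unif zeta x a <= 1.
Proof.
rewrite /unif; case: ifPn => [aC|_]; last exact: ler01.
by rewrite invf_le1 ?ltr0n ?ler1n; apply/card_gt0P; exists a.
Qed.

Lemma unif_ge_inv_card zeta x a :
  a \in C x zeta -> #|ghat x|%:R^-1 <= Unif zeta x a.
Proof. by move=> aC; rewrite /unif aC; apply: inv_card_ghat_le aC. Qed.

Lemma gap_notin_Cset x zeta a :
  a \notin C x zeta -> a \in ghat x -> Uhat / zeta < gap x a.
Proof. by rewrite inE => + ag; rewrite ag ltNge. Qed.

Hypothesis Uhat_gt0 : 0 < Uhat.

Lemma Cset_antimono x zeta1 zeta2 :
  0 < zeta1 -> zeta1 <= zeta2 -> C x zeta2 \subset C x zeta1.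
Proof.
move=> zeta1_gt0 le_zeta; apply/fintype.subsetP => a.
rewrite !inE => /andP[-> /le_trans]; apply.
by rewrite ler_pM2l // lef_pV2 // posrE; apply: lt_le_trans le_zeta.
Qed.

(* No sign condition on the gap is needed: for a zero gap both sides of the
   defining inequality of [C x (Uhat / 0)] are [0]. *)
Lemma mem_Cset_gap x a : a \in ghat x -> a \in C x (Uhat / gap x a).
Proof. by move=> ag; rewrite inE ag /= invf_div mulrC divfK ?gt_eqF. Qed.

Variables (bmax eta : R).
Hypotheses (bmax_gt0 : 0 < bmax) (eta_gt0 : 0 < eta).
Local Notation p := (ppol fhat pihat Uhat ghat bmax eta).

(* [a] is still a candidate at every level [b/eta] with [b <= b1]. *)
Lemma fine_integral_unif_ge x a b1 :
  0 < b1 <= bmax -> a \in C x (b1 / eta) ->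
  b1 / #|ghat x|%:R <=
    fine (\int[@lebesgue_measure R]_(b in `[0%R, bmax]%classic)
            (Unif (b / eta) x a)%:E).
Proof.
move=> b1_itv aC; rewrite mulrC.
apply: (fine_integral_itv_ge (M := 1)) b1_itv _ => [|b _|| b /andP[b_gt0 le_b]].
- exact: ltW.
- by rewrite unif_ge0 unif_le1.
- by rewrite invr_ge0 ler0n.
apply: unif_ge_inv_card; apply: (fintype.subsetP (Cset_antimono x _ _)) aC.
  exact: divr_gt0.
by rewrite ler_pM2r ?invr_gt0.
Qed.

Lemma ppol_ge0 x a : bmax <= 1 -> 0 <= p x a.
Proof.
move=> bmax_le1; rewrite /ppol addr_ge0 ?mulr_ge0 ?unif_ge0 ?subr_ge0 //.
by apply: fine_ge0; apply: integral_ge0 => b _; rewrite lee_fin unif_ge0.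
Qed.

Lemma ppol_ge_Cset x a : a \in C x (bmax / eta) ->
  (1 - bmax) / #|C x (bmax / eta)|%:R + bmax / #|ghat x|%:R <= p x a.
Proof.
move=> aC; rewrite /ppol {1}/unif aC lerD //.
by apply: fine_integral_unif_ge; rewrite ?bmax_gt0 ?lexx.
Qed.

Lemma ppol_ge_gap x a : a \notin C x (bmax / eta) -> a \in ghat x ->
  eta / #|ghat x|%:R * (Uhat / gap x a) <= p x a.
Proof.
move=> aC ag; have gap_gt : Uhat * eta < gap x a * bmax.
  by rewrite -ltr_pdivrMr // -mulrA -invf_div; apply: gap_notin_Cset aC ag.
have gap_gt0 : 0 < gap x a.
  by rewrite -(pmulr_lgt0 _ bmax_gt0); apply: lt_trans gap_gt; rewrite mulr_gt0.
rewrite /ppol /unif (negbTE aC) mulr0 add0r.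
have -> : eta / #|ghat x|%:R * (Uhat / gap x a) =
          eta * Uhat / gap x a / #|ghat x|%:R by ring.
apply: fine_integral_unif_ge; last first.
  have -> : eta * Uhat / gap x a / eta = Uhat / gap x a.
    by field; rewrite !gt_eqF.
  exact: mem_Cset_gap.
rewrite divr_gt0 ?mulr_gt0 //= ler_pdivrMr //.
by rewrite [eta * _]mulrC [bmax * _]mulrC ltW.
Qed.

End uniform_on_candidates.

Theorem lemmaH4 (X : Type) (A : finType) (R : realType)
  (fhat : X -> A -> R) (pihat : X -> A) (Uhat : R) (ghat : X -> {set A})
  (bmax eta : R)
  (hf : forall x a, 0 <= fhat x a <= 1)
  (hU : 0 < Uhat) (hb0 : 0 < bmax) (hb1 : bmax < 1) (heta : 1 <= eta)
  (hC : forall x zeta, 0 < zeta -> Cset fhat pihat Uhat ghat x zeta != finset.set0) :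
  forall (x : X) (a : A),
    let C := Cset fhat pihat Uhat ghat x (bmax / eta) in
    let p := ppol fhat pihat Uhat ghat bmax eta x a in
    (a \in C ->
       (1 - bmax) / #|C|%:R + bmax / #|ghat x|%:R <= p /\
       1 / #|ghat x|%:R <= (1 - bmax) / #|C|%:R + bmax / #|ghat x|%:R) /\
    (a \notin C -> a \in ghat x ->
       eta / #|ghat x|%:R * (Uhat / (fhat x (pihat x) - fhat x a)) <= p /\
       eta * Uhat / #|ghat x|%:R
         <= eta / #|ghat x|%:R * (Uhat / (fhat x (pihat x) - fhat x a))) /\
    (a \notin C -> a \notin ghat x -> 0 <= p).
Proof.
move=> x a /=.
have eta_gt0 : 0 < eta := lt_le_trans ltr01 heta.
split; [|split] => [aC | aC ag | _ _]; last exact/ppol_ge0/ltW.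
- split; first exact: ppol_ge_Cset.
  have bmax_le1 : 0 <= 1 - bmax by rewrite subr_ge0 ltW.
  by have := ler_wpM2l bmax_le1 (inv_card_ghat_le aC); rewrite div1r; lra.
- split; first exact: ppol_ge_gap.
  set gap := fhat x (pihat x) - fhat x a.
  have gap_gt0 : 0 < gap.
    by apply: le_lt_trans (gap_notin_Cset aC ag); rewrite !divr_ge0 ?ltW.
  have gap_le1 : gap <= 1.
    by move: (hf x (pihat x)) (hf x a) => /andP[_ ?] /andP[? _]; rewrite /gap; lra.
  by rewrite mulrAC mulrA ler_peMr ?invf_ge1 // mulr_ge0 ?divr_ge0 // ltW.
Qed.
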